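(* Let $0<a<1$, let $\hat c\in\{0,-1,-2,\dots\}$, and let $\mathcal F=(F_1,F_2)$ be a pair of finite sets of positive integers satisfying condition (C): $\{0,1,\dots,-\hat c\}\subset F_1\cup(-\hat c-F_2)$. For every sequence of real numbers $\hat c_s\notin\{0,-1,-2,\dots\}$ with $\lim_{s\to\infty}\hat c_s=\hat c$ we have $\lim_{s\to\infty}\rho^{\mathcal F}_{a,\hat c_s}(x)=\nu^a_{\hat c;\mathcal F}(x)$ for every $x\in\mathbb N$ (the mass at $x$). Moreover, if $\nu^a_{\hat c;\mathcal F}$ is a positive measure, then the numbers $\hat c_s\notin\{0,-1,-2,\dots\}$ with $\hat c_s\to\hat c$ can be chosen so that all the measures $\rho^{\mathcal F}_{a,\hat c_s}$ are positive as well.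
   Context: $\mathbb N=\{0,1,2,\dots\}$. For a finite set $F$ and integer $t$, $t-F=\{t-f:f\in F\}$. For $\hat c\in\{0,-1,-2,\dots\}$ and $\mathcal F$ satisfying (C), $\mathcal H=[(F_1\cup(-\hat c-F_2))\setminus\{0,1,\dots,-\hat c\}]\cup[F_1\cap(-\hat c-F_2)]$ and $\nu^a_{\hat c;\mathcal F}=\sum_{x\in\mathbb N\setminus F_1}\prod_{h\in\mathcal H}(x-h)\,a^x\,\delta_x$. For $d\notin\{0,-1,-2,\dots\}$, $\rho^{\mathcal F}_{a,d}=\sum_{x=0}^\infty\prod_{f\in F_1}(x-f)\prod_{f\in F_2}(x+d+f)\frac{a^x\Gamma(x+d)}{x!}\delta_x$. A discrete measure is positive if all its masses are nonnegative (and not all zero). *)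

From Stdlib Require Import Reals ZArith List.
From Coquelicot Require Import Coquelicot.
Import ListNotations.
Open Scope R_scope.

Definition lprod {A : Type} (g : A -> R) (l : list A) : R :=
  fold_right Rmult 1 (map g l).

Definition nonpos_int (d : R) : Prop := exists n : nat, d = - INR n.

(* Euler's Gamma function on the reals, through Gauss' limit formula
   Gamma(z) = lim_n n! n^z / (z (z+1) ... (z+n)),
   valid (and the standard meromorphic Gamma) for z not in {0,-1,-2,...}. *)
Definition Gamma (z : R) : R :=
  real (Lim_seq (fun n : nat =>
     INR (fact n) * Rpower (INR n) z / lprod (fun k : nat => z + INR k) (List.seq 0 (S n)))).

Definition finset_pos (F : list nat) : Prop := NoDup F /\ List.Forall (fun f => (0 < f)%nat) F.

Definition F1Z (F1 : list nat) : list Z := map Z.of_nat F1.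
Definition shiftF2 (c : Z) (F2 : list nat) : list Z := map (fun f => (- c - Z.of_nat f)%Z) F2.

Definition inZb (h : Z) (l : list Z) : bool := existsb (Z.eqb h) l.

Definition condC (c : Z) (F1 F2 : list nat) : Prop :=
  forall k : Z, (0 <= k <= - c)%Z -> In k (F1Z F1) \/ In k (shiftF2 c F2).

Definition Hset (c : Z) (F1 F2 : list nat) : list Z :=
  let G := shiftF2 c F2 in
  nodup Z.eq_dec
    (filter (fun h => negb ((0 <=? h)%Z && (h <=? - c)%Z)) (F1Z F1 ++ G)
     ++ filter (fun h => inZb h G) (F1Z F1)).

Definition nu (c : Z) (F1 F2 : list nat) (a : R) (x : nat) : R :=
  if in_dec Nat.eq_dec x F1 then 0
  else lprod (fun h => INR x - IZR h) (Hset c F1 F2) * a ^ x.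

Definition rho (F1 F2 : list nat) (a d : R) (x : nat) : R :=
  lprod (fun f => INR x - INR f) F1 * lprod (fun f => INR x + d + INR f) F2
  * (a ^ x * Gamma (INR x + d) / INR (fact x)).

Definition positive_measure (m : nat -> R) : Prop :=
  (forall x, 0 <= m x) /\ exists x, m x <> 0.

From Stdlib Require Import Reals ZArith List Lia Lra Permutation.
From Coquelicot Require Import Coquelicot.
Open Scope R_scope.

(** For [z > 0] the Gauss products
       increase with an explicit telescoping bound, which gives convergence, positivity and
       (through a uniform error estimate) continuity; the recurrence of the Gauss products in
       [z] extends convergence to all non-poles and yields [Gamma (z+1) = z Gamma z],
       [Gamma (j+1) = j!] and the residue [(-1)^m / m!] at the pole [-m].
    2. Combinatorics.  Condition (C) says exactly that the multiset [F1 + (-c - F2)] equals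
       [H + {0, ..., -c}] ([decomposition_perm]).  For [x] in [F1] both masses vanish; for [x > -c] the factor [Gamma(x + d)] is
       continuous at [d = c]; for [x <= -c] outside [F1], (C) gives [x = -c - m] with [m] in
       [F2], and the zero of [x + d + m] compensates the pole of [Gamma].
    4. Positivity.  Along [d = c + 1/(s+2)] the masses at large [x] are positive, and the
       finitely many small [x] are positive from some index on by step 3. *)

Lemma lprod_cons {A} (g : A -> R) a l : lprod g (a :: l) = g a * lprod g l.
Proof. reflexivity. Qed.

Lemma lprod_app {A} (g : A -> R) l1 l2 : lprod g (l1 ++ l2) = lprod g l1 * lprod g l2.
Proof. unfold lprod; induction l1 as [|b l IH]; simpl; [ring | rewrite IH; ring]. Qed.

Lemma lprod_map {A B} (g : B -> R) (f : A -> B) l :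
  lprod g (map f l) = lprod (fun x => g (f x)) l.
Proof. unfold lprod; rewrite map_map; reflexivity. Qed.

Lemma lprod_ext {A} (g h : A -> R) l :
  (forall x, In x l -> g x = h x) -> lprod g l = lprod h l.
Proof.
  induction l as [|b l IH]; intros H; [reflexivity|].
  rewrite !lprod_cons, H, IH by auto with datatypes; reflexivity.
Qed.

Lemma lprod_perm {A} (g : A -> R) l1 l2 : Permutation l1 l2 -> lprod g l1 = lprod g l2.
Proof. induction 1; unfold lprod in *; simpl; try lra; congruence. Qed.

Lemma lprod_pos {A} (g : A -> R) l : (forall x, In x l -> 0 < g x) -> 0 < lprod g l.
Proof.
  induction l as [|b l IH]; intros H; unfold lprod in *; simpl; [lra|].
  apply Rmult_lt_0_compat; auto with datatypes.
Qed.

Lemma lprod_neq0 {A} (g : A -> R) l : (forall x, In x l -> g x <> 0) -> lprod g l <> 0.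
Proof.
  induction l as [|b l IH]; intros H; unfold lprod in *; simpl; [lra|].
  apply Rmult_integral_contrapositive_currified; auto with datatypes.
Qed.

Lemma lprod_zero {A} (g : A -> R) l x : In x l -> g x = 0 -> lprod g l = 0.
Proof.
  induction l as [|b l IH]; simpl; [tauto|]; intros [<-|H] Hg; rewrite lprod_cons.
  - rewrite Hg; ring.
  - rewrite IH by auto; ring.
Qed.

Lemma lprod_lim {A} (l : list A) (g : nat -> A -> R) (gl : A -> R) :
  (forall a, In a l -> is_lim_seq (fun s => g s a) (gl a)) ->
  is_lim_seq (fun s => lprod (g s) l) (lprod gl l).
Proof.
  induction l as [|b l IH]; intros H; unfold lprod in *; simpl.
  - apply is_lim_seq_const.
  - apply is_lim_seq_mult'; auto with datatypes.
Qed.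

Lemma lprod_seq_S (g : nat -> R) s n :
  lprod g (seq s (S n)) = lprod g (seq s n) * g (s + n)%nat.
Proof. rewrite seq_S, lprod_app; unfold lprod at 2; simpl; ring. Qed.

Lemma lprod_seq0_S (g : nat -> R) n :
  lprod g (seq 0 (S n)) = g 0%nat * lprod (fun k => g (S k)) (seq 0 n).
Proof. simpl seq; rewrite lprod_cons, <- seq_shift, lprod_map; reflexivity. Qed.

Lemma lprod_fact m : lprod (fun k => 1 + INR k) (seq 0 m) = INR (fact m).
Proof.
  induction m as [|m IH]; [unfold lprod; simpl; ring|].
  rewrite lprod_seq_S, IH; simpl (0 + m)%nat.
  change (fact (S m)) with (S m * fact m)%nat; rewrite mult_INR, S_INR; ring.
Qed.

Lemma lprod_falling j i :
  lprod (fun k => INR (j + i) - INR k) (seq 0 i) * INR (fact j) = INR (fact (j + i)).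
Proof.
  induction i as [|i IH].
  - rewrite Nat.add_0_r; unfold lprod; simpl; ring.
  - rewrite lprod_seq0_S, (lprod_ext _ (fun k => INR (j + i) - INR k))
      by (intros; rewrite Nat.add_succ_r, !S_INR; ring).
    rewrite Rmult_assoc, IH, Nat.add_succ_r.
    change (fact (S (j + i))) with (S (j + i) * fact (j + i))%nat.
    rewrite mult_INR; simpl INR at 2; ring.
Qed.

Lemma lprod_neg_fact m : lprod (fun k => - INR m + INR k) (seq 0 m) = (-1) ^ m * INR (fact m).
Proof.
  induction m as [|m IH]; [unfold lprod; simpl; ring|].
  rewrite lprod_seq0_S, (lprod_ext _ (fun k => - INR m + INR k)) by (intros; rewrite !S_INR; ring).
  rewrite IH; change (fact (S m)) with (S m * fact m)%nat; rewrite mult_INR, S_INR; simpl; ring.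
Qed.

Lemma lprod_above x m :
  lprod (fun k => INR x - INR k) (seq (S x) m) = (-1) ^ m * INR (fact m).
Proof.
  induction m as [|m IH]; [unfold lprod; simpl; ring|].
  rewrite lprod_seq_S, IH; change (fact (S m)) with (S m * fact m)%nat.
  rewrite mult_INR, plus_INR, !S_INR; simpl; ring.
Qed.

Definition gauss (z : R) (n : nat) : R :=
  INR (fact n) * Rpower (INR n) z / lprod (fun k : nat => z + INR k) (seq 0 (S n)).

Lemma Gamma_gauss z : Gamma z = real (Lim_seq (gauss z)).
Proof. reflexivity. Qed.

Lemma not_nonpos_plus z k : ~ nonpos_int z -> z + INR k <> 0.
Proof. intros H E; apply H; exists k; lra. Qed.

Lemma not_nonpos_pos z : 0 < z -> ~ nonpos_int z.
Proof. intros H [k Hk]; pose proof (pos_INR k); lra. Qed.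

Lemma not_nonpos_shift z x : ~ nonpos_int z -> ~ nonpos_int (INR x + z).
Proof. intros H [k Hk]; apply H; exists (k + x)%nat; rewrite plus_INR; lra. Qed.

Lemma gauss_pos z n : 0 < z -> 0 < gauss z n.
Proof.
  intros Hz; unfold gauss, Rdiv, Rpower.
  apply Rmult_lt_0_compat; [apply Rmult_lt_0_compat; [apply INR_fact_lt_0 | apply exp_pos]|].
  apply Rinv_0_lt_compat, lprod_pos; intros x _; pose proof (pos_INR x); lra.
Qed.

Lemma exp_le_compat x y : x <= y -> exp x <= exp y.
Proof. intros [H|<-]; [left; apply exp_increasing; auto | lra]. Qed.

Definition gauss_ratio (z : R) (n : nat) : R :=
  (INR n + 1) * exp (z * (ln (INR n + 1) - ln (INR n))) / (z + INR n + 1).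

Lemma gauss_succ z n : 0 < z -> (1 <= n)%nat -> gauss z (S n) = gauss z n * gauss_ratio z n.
Proof.
  intros Hz Hn; unfold gauss, gauss_ratio, Rpower.
  assert (HP : 0 < lprod (fun k : nat => z + INR k) (seq 0 (S n))).
  { apply lprod_pos; intros x _; pose proof (pos_INR x); lra. }
  rewrite (lprod_seq_S _ 0 (S n)), Nat.add_0_l, S_INR.
  change (fact (S n)) with (S n * fact n)%nat; rewrite mult_INR, S_INR.
  replace (z * ln (INR n + 1)) with (z * ln (INR n) + z * (ln (INR n + 1) - ln (INR n))) by ring.
  rewrite exp_plus; pose proof (pos_INR n); field; lra.
Qed.

(** [1/(n+1) <= ln (n+1) - ln n <= 1/n], from [1 + t <= exp t]. *)
Lemma ln_succ_bounds n : (1 <= n)%nat ->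
  / (INR n + 1) <= ln (INR n + 1) - ln (INR n) <= / INR n.
Proof.
  intros Hn; assert (Hn' : 1 <= INR n) by (apply (le_INR 1); auto); split.
  - assert (H : INR n <= (INR n + 1) * exp (- / (INR n + 1))).
    { apply Rle_trans with ((INR n + 1) * (1 + - / (INR n + 1))); [right; field; lra|].
      apply Rmult_le_compat_l; [lra | apply exp_ineq1_le]. }
    apply ln_le in H; [|lra]; rewrite ln_mult, ln_exp in H; [lra | lra | apply exp_pos].
  - assert (H : INR n + 1 <= INR n * exp (/ INR n)).
    { apply Rle_trans with (INR n * (1 + / INR n)); [right; field; lra|].
      apply Rmult_le_compat_l; [lra | apply exp_ineq1_le]. }
    apply ln_le in H; [|lra]; rewrite ln_mult, ln_exp in H; [lra | lra | apply exp_pos].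
Qed.

(** For [z >= 0] the Gauss products increase, with a telescoping upper bound on the ratio. *)
Lemma gauss_ratio_ge1 z n : 0 <= z -> (1 <= n)%nat -> 1 <= gauss_ratio z n.
Proof.
  intros Hz Hn; pose proof (ln_succ_bounds n Hn) as [D1 _]; pose proof (pos_INR n).
  unfold gauss_ratio; set (D := ln (INR n + 1) - ln (INR n)) in *.
  assert (Hzd : z / (INR n + 1) <= z * D) by (apply Rmult_le_compat_l; auto).
  pose proof (exp_ineq1_le (z * D)).
  apply Rmult_le_reg_r with (z + INR n + 1); [lra|].
  unfold Rdiv; rewrite Rmult_assoc, Rinv_l, Rmult_1_r by lra.
  apply Rle_trans with ((INR n + 1) * (1 + z / (INR n + 1))); [right; field; lra|].
  apply Rmult_le_compat_l; lra.
Qed.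

Lemma gauss_ratio_le z n : 0 <= z -> (1 <= n)%nat ->
  gauss_ratio z n <= exp (z * (z + 1) * (/ INR n - / (INR n + 1))).
Proof.
  intros Hz Hn; pose proof (ln_succ_bounds n Hn) as [_ D2].
  assert (Hn' : 1 <= INR n) by (apply (le_INR 1); auto).
  unfold gauss_ratio; set (D := ln (INR n + 1) - ln (INR n)) in *.
  assert (E1 : exp (z * D) <= exp (z / INR n)) by (apply exp_le_compat, Rmult_le_compat_l; auto).
  assert (E2 : (INR n + 1) / (z + INR n + 1) <= exp (- z / (z + INR n + 1))).
  { eapply Rle_trans; [|apply exp_ineq1_le]; right; field; lra. }
  apply Rle_trans with (exp (z / INR n) * exp (- z / (z + INR n + 1))).
  { replace ((INR n + 1) * exp (z * D) / (z + INR n + 1))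
      with (exp (z * D) * ((INR n + 1) / (z + INR n + 1))) by (field; lra).
    apply Rmult_le_compat; try (left; apply exp_pos); auto.
    apply Rlt_le, Rdiv_lt_0_compat; lra. }
  rewrite <- exp_plus; apply exp_le_compat.
  replace (z / INR n + - z / (z + INR n + 1)) with (z * (z + 1) * / (INR n * (z + INR n + 1)))
    by (field; lra).
  replace (/ INR n - / (INR n + 1)) with (/ (INR n * (INR n + 1))) by (field; lra).
  apply Rmult_le_compat_l; [nra | apply Rinv_le_contravar; nra].
Qed.

Lemma gauss_telescope z K N j : 0 < z -> z * (z + 1) <= K -> (1 <= N)%nat ->
  gauss z N <= gauss z (N + j) <= gauss z N * exp (K * (/ INR N - / INR (N + j))).
Proof.
  intros Hz HK HN; induction j as [|j [IH1 IH2]].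
  - rewrite Nat.add_0_r, Rminus_diag, Rmult_0_r, exp_0; lra.
  - rewrite Nat.add_succ_r, gauss_succ by (auto; lia).
    pose proof (gauss_ratio_ge1 z (N + j) (Rlt_le _ _ Hz) ltac:(lia)).
    pose proof (gauss_ratio_le z (N + j) (Rlt_le _ _ Hz) ltac:(lia)).
    pose proof (gauss_pos z (N + j) Hz).
    assert (HI : 1 <= INR (N + j)) by (apply (le_INR 1); lia).
    split; [nra|].
    apply Rle_trans with (gauss z N * exp (K * (/ INR N - / INR (N + j)))
                          * exp (K * (/ INR (N + j) - / (INR (N + j) + 1)))).
    + apply Rmult_le_compat; try lra.
      eapply Rle_trans; [eassumption|]; apply exp_le_compat, Rmult_le_compat_r; auto.
      assert (/ (INR (N + j) + 1) <= / INR (N + j)) by (apply Rinv_le_contravar; lra); lra.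
    + rewrite Rmult_assoc, <- exp_plus, S_INR; right; f_equal; f_equal; ring.
Qed.

(** On the positive half-line the Gauss products converge (monotone and bounded). *)
Lemma gauss_cvg_pos z : 0 < z -> is_lim_seq (gauss z) (Gamma z).
Proof.
  intros Hz.
  assert (Hex : ex_finite_lim_seq (fun n => gauss z (S n))).
  { apply ex_finite_lim_seq_incr with (M := gauss z 1 * exp (z * (z + 1))).
    - intros n; rewrite (gauss_succ z (S n)) by (auto; lia).
      pose proof (gauss_ratio_ge1 z (S n) (Rlt_le _ _ Hz) ltac:(lia)).
      pose proof (gauss_pos z (S n) Hz); nra.
    - intros n; destruct (gauss_telescope z (z * (z + 1)) 1 n Hz (Rle_refl _) (le_n _)) as [_ H].
      eapply Rle_trans; [apply H|]; apply Rmult_le_compat_l; [left; apply gauss_pos; auto|].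
      apply exp_le_compat.
      assert (0 < / INR (1 + n)) by (apply Rinv_0_lt_compat, (lt_INR 0); lia).
      assert (0 < z * (z + 1)) by nra.
      change (INR 1) with 1; rewrite Rinv_1; nra. }
  destruct Hex as [l Hl]; apply is_lim_seq_incr_1 in Hl.
  rewrite Gamma_gauss, (is_lim_seq_unique _ _ Hl); exact Hl.
Qed.

Lemma gauss_sandwich z K N : 0 < z -> z * (z + 1) <= K -> (1 <= N)%nat ->
  gauss z N <= Gamma z <= gauss z N * exp (K / INR N).
Proof.
  intros Hz HK HN; pose proof (gauss_cvg_pos z Hz) as Hl.
  apply (is_lim_seq_incr_n _ N) in Hl; assert (HKp : 0 <= K) by nra.
  split.
  - apply (is_lim_seq_le (fun _ => gauss z N) (fun n => gauss z (n + N)) (gauss z N) (Gamma z));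
      [|apply is_lim_seq_const | exact Hl].
    intros n; rewrite Nat.add_comm; apply (gauss_telescope z K N n Hz HK HN).
  - apply (is_lim_seq_le (fun n => gauss z (n + N)) (fun _ => gauss z N * exp (K / INR N))
             (Gamma z) (gauss z N * exp (K / INR N)));
      [|exact Hl | apply is_lim_seq_const].
    intros n; rewrite Nat.add_comm.
    destruct (gauss_telescope z K N n Hz HK HN) as [_ H2]; eapply Rle_trans; [apply H2|].
    apply Rmult_le_compat_l; [left; apply gauss_pos; auto|]; apply exp_le_compat.
    assert (0 < / INR (N + n)) by (apply Rinv_0_lt_compat, (lt_INR 0); lia).
    unfold Rdiv; apply Rmult_le_compat_l; lra.
Qed.

Lemma Gamma_pos z : 0 < z -> 0 < Gamma z.
Proof.
  intros Hz; destruct (gauss_sandwich z (z * (z + 1)) 1 Hz (Rle_refl _) (le_n _)).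
  pose proof (gauss_pos z 1 Hz); lra.
Qed.

Lemma gauss_error z K N d : 0 < z -> z * (z + 1) <= K -> (1 <= N)%nat ->
  exp (K / INR N) <= 1 + d -> Rabs (Gamma z - gauss z N) <= gauss z N * d.
Proof.
  intros Hz HK HN Hd; destruct (gauss_sandwich z K N Hz HK HN).
  pose proof (gauss_pos z N Hz); rewrite Rabs_pos_eq; nra.
Qed.

Lemma gauss_cont N u w : 0 < w -> is_lim_seq u w -> is_lim_seq (fun s => gauss (u s) N) (gauss w N).
Proof.
  intros Hw Hu; unfold gauss; apply is_lim_seq_div'.
  - apply is_lim_seq_mult'; [apply is_lim_seq_const|]; unfold Rpower.
    apply (is_lim_seq_continuous exp (fun s => u s * ln (INR N))).
    + apply derivable_continuous_pt, derivable_pt_exp.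
    + apply is_lim_seq_mult'; [auto | apply is_lim_seq_const].
  - apply lprod_lim; intros a _; apply is_lim_seq_plus'; [auto | apply is_lim_seq_const].
  - apply lprod_neq0; intros x _; pose proof (pos_INR x); lra.
Qed.

Lemma exp_small K d : 0 <= K -> 0 < d -> exists N, (1 <= N)%nat /\ exp (K / INR N) <= 1 + d.
Proof.
  intros HK Hd; assert (Hl : 0 < ln (1 + d)) by (rewrite <- ln_1; apply ln_increasing; lra).
  assert (Hx : 0 <= K / ln (1 + d)) by (apply Rdiv_le_0_compat; lra).
  destruct (nfloor_ex _ Hx) as [n [_ Hn]]; exists (S n); split; [lia|].
  rewrite S_INR, <- (exp_ln (1 + d)) by lra; apply exp_le_compat.
  pose proof (pos_INR n).
  apply Rmult_le_reg_r with ((INR n + 1) / ln (1 + d)); [apply Rdiv_lt_0_compat; lra|].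
  replace (K / (INR n + 1) * ((INR n + 1) / ln (1 + d))) with (K / ln (1 + d)) by (field; lra).
  replace (ln (1 + d) * ((INR n + 1) / ln (1 + d))) with (INR n + 1) by (field; lra); lra.
Qed.

(** [Gamma] is continuous on [(0, oo)]: the Gauss products converge locally uniformly. *)
Lemma Gamma_cont w u : 0 < w -> is_lim_seq u w -> is_lim_seq (fun s => Gamma (u s)) (Gamma w).
Proof.
  intros Hw Hu; pose proof (Gamma_pos w Hw) as HGw.
  set (K := (w + 1) * (w + 2)); set (B := Gamma w + 1).
  apply is_lim_seq_spec; intros eps; pose proof (cond_pos eps) as Heps.
  set (d := eps / (4 * B)).
  assert (Hd : 0 < d) by (unfold d, B; apply Rdiv_lt_0_compat; lra).
  destruct (exp_small K d) as [N [HN HE]]; [unfold K; nra | auto|].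
  set (eta := Rmin 1 (eps / 4)).
  assert (Heta : 0 < eta) by (apply Rmin_glb_lt; lra).
  assert (Hm : 0 < Rmin w 1) by (apply Rmin_glb_lt; lra).
  pose proof (gauss_cont N u w Hw Hu) as HG; apply is_lim_seq_spec in HG.
  apply is_lim_seq_spec in Hu.
  destruct (HG (mkposreal eta Heta)) as [N1 HG1], (Hu (mkposreal _ Hm)) as [N2 Hu2].
  exists (max N1 N2); intros s Hs.
  specialize (HG1 s ltac:(lia)); specialize (Hu2 s ltac:(lia)); simpl in HG1, Hu2.
  pose proof (Rmin_l w 1); pose proof (Rmin_r w 1).
  assert (eta <= 1) by apply Rmin_l; assert (eta <= eps / 4) by apply Rmin_r.
  apply Rabs_def2 in Hu2; pose proof (Rabs_def2 _ _ HG1) as [HG2 HG3].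
  assert (Hz : 0 < u s) by lra.
  pose proof (gauss_error (u s) K N d Hz ltac:(unfold K; nra) HN HE) as Eu.
  pose proof (gauss_error w K N d Hw ltac:(unfold K; nra) HN HE) as Ew.
  pose proof (gauss_sandwich w K N Hw ltac:(unfold K; nra) HN).
  assert (Hd4 : 4 * B * d = eps) by (unfold d, B; field; lra).
  assert (Gu : gauss (u s) N * d <= B * d) by (apply Rmult_le_compat_r; unfold B; lra).
  assert (Gw : gauss w N * d <= B * d) by (apply Rmult_le_compat_r; unfold B; lra).
  replace (Gamma (u s) - Gamma w)
    with ((Gamma (u s) - gauss (u s) N) + (gauss (u s) N - gauss w N) - (Gamma w - gauss w N))
    by ring.
  pose proof (Rabs_triang (Gamma (u s) - gauss (u s) N) (gauss (u s) N - gauss w N)).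
  pose proof (Rabs_triang ((Gamma (u s) - gauss (u s) N) + (gauss (u s) N - gauss w N))
                          (- (Gamma w - gauss w N))).
  rewrite Rabs_Ropp in *; unfold Rminus at 1; lra.
Qed.

(** Recurrence of the Gauss products in [z], used to reach the negative non-integers. *)
Lemma gauss_shift z n : ~ nonpos_int z -> (1 <= n)%nat ->
  gauss z n = gauss (z + 1) n * ((z + INR n + 1) / (INR n * z)).
Proof.
  intros Hz Hn; assert (Hn' : 1 <= INR n) by (apply (le_INR 1); auto).
  pose proof (not_nonpos_plus z 0 Hz) as Hz0; simpl INR in Hz0; rewrite Rplus_0_r in Hz0.
  assert (E : lprod (fun k => z + 1 + INR k) (seq 0 (S n))
              = lprod (fun k => z + INR k) (seq 0 (S n)) * (z + INR n + 1) / z).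
  { rewrite (lprod_seq_S (fun k => z + 1 + INR k)), (lprod_seq0_S (fun k => z + INR k)).
    rewrite (lprod_ext (fun k => z + 1 + INR k) (fun k => z + INR (S k)))
      by (intros; rewrite S_INR; ring).
    rewrite Nat.add_0_l; simpl INR; field; auto. }
  assert (P0 : lprod (fun k => z + INR k) (seq 0 (S n)) <> 0)
    by (apply lprod_neq0; intros; apply not_nonpos_plus; auto).
  assert (Hzn : z + INR n + 1 <> 0) by (rewrite Rplus_assoc, <- S_INR; apply not_nonpos_plus; auto).
  unfold gauss; rewrite Rpower_plus, Rpower_1, E by lra; field; repeat split; auto; lra.
Qed.

Lemma inv_INR_lim : is_lim_seq (fun n => / INR n) 0.
Proof. apply (is_lim_seq_inv INR p_infty is_lim_seq_INR); discriminate. Qed.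

Lemma gauss_down z (L : R) : ~ nonpos_int z ->
  is_lim_seq (gauss (z + 1)) L -> is_lim_seq (gauss z) (L / z).
Proof.
  intros Hz HL; pose proof (not_nonpos_plus z 0 Hz) as Hz0; simpl INR in Hz0.
  rewrite Rplus_0_r in Hz0.
  apply is_lim_seq_ext_loc with (fun n => gauss (z + 1) n * (/ z * (1 + (z + 1) * / INR n))).
  { exists 1%nat; intros n Hn; rewrite (gauss_shift z n Hz Hn).
    assert (1 <= INR n) by (apply (le_INR 1); auto); f_equal; field; lra. }
  replace (L / z) with (L * (/ z * (1 + (z + 1) * 0))) by (field; auto).
  apply is_lim_seq_mult', is_lim_seq_mult', is_lim_seq_plus', is_lim_seq_mult';
    auto using is_lim_seq_const, inv_INR_lim.
Qed.

Lemma gauss_cvg z : ~ nonpos_int z -> is_lim_seq (gauss z) (Gamma z).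
Proof.
  intros Hz.
  assert (H : forall j z, ~ nonpos_int z -> 0 < z + INR j -> is_lim_seq (gauss z) (Gamma z)).
  { clear; induction j as [|j IH]; intros z Hz Hp.
    - apply gauss_cvg_pos; simpl in Hp; lra.
    - assert (Hz1 : ~ nonpos_int (z + 1))
        by (intros [k Hk]; apply Hz; exists (S k); rewrite S_INR; lra).
      pose proof (gauss_down z _ Hz (IH (z + 1) Hz1 ltac:(rewrite S_INR in Hp; lra))) as H1.
      rewrite Gamma_gauss, (is_lim_seq_unique _ _ H1); auto. }
  destruct (nfloor_ex (Rabs z) (Rabs_pos z)) as [n [_ Hn]].
  apply (H (S n)); auto; rewrite S_INR; pose proof (Rle_abs (- z)); rewrite Rabs_Ropp in *; lra.
Qed.

Lemma Gamma_rec z : ~ nonpos_int z -> Gamma (z + 1) = z * Gamma z.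
Proof.
  intros Hz; pose proof (not_nonpos_plus z 0 Hz) as Hz0; simpl INR in Hz0.
  rewrite Rplus_0_r in Hz0.
  assert (Hz1 : ~ nonpos_int (z + 1))
    by (intros [k Hk]; apply Hz; exists (S k); rewrite S_INR; lra).
  pose proof (gauss_down z _ Hz (gauss_cvg (z + 1) Hz1)) as H1.
  pose proof (gauss_cvg z Hz) as H2.
  apply is_lim_seq_unique in H1; apply is_lim_seq_unique in H2; rewrite H1 in H2.
  injection H2 as E; rewrite <- E; field; auto.
Qed.

Lemma Gamma_1 : Gamma 1 = 1.
Proof.
  assert (H : is_lim_seq (gauss 1) 1).
  { apply is_lim_seq_ext_loc with (fun n => 1 / (1 + / INR n)).
    { exists 1%nat; intros n Hn; assert (1 <= INR n) by (apply (le_INR 1); auto).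
      unfold gauss; rewrite Rpower_1, lprod_fact by lra.
      change (fact (S n)) with (S n * fact n)%nat; rewrite mult_INR, S_INR.
      pose proof (INR_fact_lt_0 n); field; lra. }
    assert (Hx : is_lim_seq (fun n => 1 / (1 + / INR n)) (1 / (1 + 0))).
    { apply is_lim_seq_div'; [apply is_lim_seq_const | | lra].
      apply is_lim_seq_plus'; auto using is_lim_seq_const, inv_INR_lim. }
    replace (1 / (1 + 0)) with 1 in Hx by field; exact Hx. }
  pose proof (gauss_cvg_pos 1 ltac:(lra)) as H'.
  apply is_lim_seq_unique in H; apply is_lim_seq_unique in H'; rewrite H in H'.
  injection H' as E; auto.
Qed.

Lemma Gamma_nat j : Gamma (INR (S j)) = INR (fact j).
Proof.
  induction j as [|j IH]; [apply Gamma_1|].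
  rewrite (S_INR (S j)), Gamma_rec, IH by (apply not_nonpos_pos, (lt_INR 0); lia).
  change (fact (S j)) with (S j * fact j)%nat; rewrite mult_INR; ring.
Qed.

Lemma Gamma_shift z j : ~ nonpos_int z ->
  Gamma (z + INR j) = Gamma z * lprod (fun k => z + INR k) (seq 0 j).
Proof.
  intros Hz; induction j as [|j IH].
  - simpl; rewrite Rplus_0_r; unfold lprod; simpl; ring.
  - rewrite S_INR, <- Rplus_assoc, Gamma_rec, IH, lprod_seq_S; [simpl (0 + j)%nat; ring|].
    intros [k Hk]; apply Hz; exists (k + j)%nat; rewrite plus_INR; lra.
Qed.

Lemma Gamma_residue m u : (forall s, ~ nonpos_int (u s)) -> is_lim_seq u (- INR m) ->
  is_lim_seq (fun s => (u s + INR m) * Gamma (u s)) (/ ((-1) ^ m * INR (fact m))).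
Proof.
  intros Hu Hl; rewrite <- lprod_neg_fact.
  assert (Pnz : lprod (fun k => - INR m + INR k) (seq 0 m) <> 0).
  { apply lprod_neq0; intros k Hk; apply in_seq in Hk.
    assert (INR k < INR m) by (apply lt_INR; lia); lra. }
  apply is_lim_seq_ext with
    (fun s => Gamma (u s + INR (S m)) / lprod (fun k => u s + INR k) (seq 0 m)).
  { intros s; rewrite Gamma_shift, lprod_seq_S by auto; simpl (0 + m)%nat.
    field; apply lprod_neq0; intros; apply not_nonpos_plus; auto. }
  replace (/ lprod (fun k => - INR m + INR k) (seq 0 m))
    with (Gamma 1 / lprod (fun k => - INR m + INR k) (seq 0 m)) by (rewrite Gamma_1; field; auto).
  apply is_lim_seq_div'; auto.
  - replace 1 with (- INR m + INR (S m)) by (rewrite S_INR; ring).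
    apply Gamma_cont; [rewrite S_INR; lra|].
    apply is_lim_seq_plus'; auto using is_lim_seq_const.
  - apply lprod_lim; intros; apply is_lim_seq_plus'; auto using is_lim_seq_const.
Qed.

Definition rangeZ (n : nat) : list Z := map Z.of_nat (seq 0 (S n)).

Lemma in_F1Z F1 h : In h (F1Z F1) <-> exists f, In f F1 /\ h = Z.of_nat f.
Proof. unfold F1Z; rewrite in_map_iff; split; intros [f [A B]]; eauto. Qed.

Lemma in_shiftF2 c F2 h : In h (shiftF2 c F2) <-> exists f, In f F2 /\ h = (- c - Z.of_nat f)%Z.
Proof. unfold shiftF2; rewrite in_map_iff; split; intros [f [A B]]; eauto. Qed.

Lemma inZb_In h l : inZb h l = true <-> In h l.
Proof.
  unfold inZb; rewrite existsb_exists; split.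
  - intros [y [Hy E]]; apply Z.eqb_eq in E; subst; auto.
  - intros Hh; exists h; split; [auto | apply Z.eqb_refl].
Qed.

Lemma in_Hset c F1 F2 h : In h (Hset c F1 F2) <->
  ((In h (F1Z F1) \/ In h (shiftF2 c F2)) /\ ~ (0 <= h <= - c)%Z) \/
  (In h (F1Z F1) /\ In h (shiftF2 c F2)).
Proof.
  unfold Hset; rewrite nodup_In, in_app_iff, !filter_In, in_app_iff, inZb_In.
  rewrite Bool.negb_true_iff, Bool.andb_false_iff, !Z.leb_gt; split.
  - intros [[A B]|[A B]]; [left|right]; split; auto; lia.
  - intros [[A B]|[A B]]; [left|right]; split; auto.
    destruct (Z_le_gt_dec 0 h); [right|left]; lia.
Qed.

Lemma in_rangeZ n h : In h (rangeZ n) <-> (0 <= h <= Z.of_nat n)%Z.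
Proof.
  unfold rangeZ; rewrite in_map_iff; split.
  - intros [k [<- Hk]]; apply in_seq in Hk; lia.
  - intros H; exists (Z.to_nat h); split; [lia | apply in_seq; lia].
Qed.

Lemma count_occ_NoDup (l : list Z) x : NoDup l ->
  count_occ Z.eq_dec l x = if in_dec Z.eq_dec x l then 1%nat else 0%nat.
Proof.
  intros H; destruct (in_dec Z.eq_dec x l) as [I|I].
  - apply (proj1 (NoDup_count_occ' Z.eq_dec l) H x I).
  - apply (count_occ_not_In Z.eq_dec) in I; auto.
Qed.

(** Under (C) the multiset [F1 + (-c - F2)] is exactly [H + {0, ..., -c}]: a point of
    [{0, ..., -c}] lies in [F1] or in [-c - F2] (in both iff it lies in [H]), while a
    point outside lies in [H] iff it lies in [F1] or in [-c - F2] (never in both, since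
    [F1 > 0] and [-c - F2 <= -c]). *)
Lemma decomposition_perm c F1 F2 : (c <= 0)%Z -> finset_pos F1 -> finset_pos F2 -> condC c F1 F2 ->
  Permutation (F1Z F1 ++ shiftF2 c F2) (Hset c F1 F2 ++ rangeZ (Z.to_nat (- c))).
Proof.
  intros Hc [N1 P1] [N2 _] HC.
  assert (ND1 : NoDup (F1Z F1)) by (apply FinFun.Injective_map_NoDup; [intros ? ? ?; lia | auto]).
  assert (ND2 : NoDup (shiftF2 c F2))
    by (apply FinFun.Injective_map_NoDup; [intros ? ? ?; lia | auto]).
  assert (NDR : NoDup (rangeZ (Z.to_nat (- c))))
    by (apply FinFun.Injective_map_NoDup; [intros ? ? ?; lia | apply seq_NoDup]).
  assert (NDH : NoDup (Hset c F1 F2)) by apply NoDup_nodup.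
  apply (Permutation_count_occ Z.eq_dec); intros h.
  rewrite !count_occ_app, !count_occ_NoDup by auto.
  pose proof (in_Hset c F1 F2 h) as IH.
  assert (IR : In h (rangeZ (Z.to_nat (- c))) <-> (0 <= h <= - c)%Z) by (rewrite in_rangeZ; lia).
  assert (I1 : In h (F1Z F1) -> (1 <= h)%Z).
  { intros [f [Hf ->]]%in_F1Z; rewrite Forall_forall in P1; specialize (P1 f Hf); lia. }
  assert (I2 : In h (shiftF2 c F2) -> (h <= - c)%Z) by (intros [f [_ ->]]%in_shiftF2; lia).
  specialize (HC h).
  destruct (in_dec Z.eq_dec h (F1Z F1)), (in_dec Z.eq_dec h (shiftF2 c F2)),
    (in_dec Z.eq_dec h (Hset c F1 F2)), (in_dec Z.eq_dec h (rangeZ (Z.to_nat (- c))));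
    simpl; try reflexivity; exfalso; try tauto.
  (* the only remaining case: [h] in [F1] and in [-c - F2] lies in [{1, ..., -c}] *)
  apply n, IR; pose proof (I1 i); pose proof (I2 i0); lia.
Qed.

Lemma IZR_nonpos c : (c <= 0)%Z -> IZR c = - INR (Z.to_nat (- c)).
Proof. intros Hc; rewrite INR_IZR_INZ, Z2Nat.id, opp_IZR by lia; ring. Qed.

Lemma lprod_eval_nat (x : nat) l :
  lprod (fun h => INR x - IZR h) (map Z.of_nat l) = lprod (fun k => INR x - INR k) l.
Proof. rewrite lprod_map; apply lprod_ext; intros; rewrite <- INR_IZR_INZ; reflexivity. Qed.

Lemma lprod_eval_shift (x : nat) c l :
  lprod (fun h => INR x - IZR h) (shiftF2 c l) = lprod (fun f => INR x + IZR c + INR f) l.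
Proof.
  unfold shiftF2; rewrite lprod_map; apply lprod_ext; intros.
  rewrite minus_IZR, opp_IZR, <- INR_IZR_INZ; ring.
Qed.

Lemma rho_F1 F1 F2 a d x : In x F1 -> rho F1 F2 a d x = 0.
Proof. intros Hx; unfold rho; rewrite (lprod_zero _ F1 x Hx) by ring; ring. Qed.

Lemma rho_cont F1 F2 a x cs d : 0 < INR x + d -> is_lim_seq cs d ->
  is_lim_seq (fun s => rho F1 F2 a (cs s) x) (rho F1 F2 a d x).
Proof.
  intros Hd Hl; unfold rho.
  apply is_lim_seq_mult'; [apply is_lim_seq_mult'|].
  - apply is_lim_seq_const.
  - apply lprod_lim; intros; apply is_lim_seq_plus'; auto using is_lim_seq_const.
    apply is_lim_seq_plus'; auto using is_lim_seq_const.
  - apply is_lim_seq_div'; auto using is_lim_seq_const, INR_fact_neq_0.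
    apply is_lim_seq_mult'; auto using is_lim_seq_const.
    apply Gamma_cont; auto; apply is_lim_seq_plus'; auto using is_lim_seq_const.
Qed.

Section Limits.

Variables (a : R) (c : Z) (F1 F2 : list nat).
Hypotheses (Hc : (c <= 0)%Z) (HF1 : finset_pos F1) (HF2 : finset_pos F2) (HC : condC c F1 F2).

Lemma mass_identity x :
  lprod (fun f => INR x - INR f) F1 * lprod (fun f => INR x + IZR c + INR f) F2
  = lprod (fun h => INR x - IZR h) (Hset c F1 F2)
    * lprod (fun k => INR x - INR k) (seq 0 (S (Z.to_nat (- c)))).
Proof.
  pose proof (lprod_perm (fun h => INR x - IZR h) _ _ (decomposition_perm c F1 F2 Hc HF1 HF2 HC)) as E.
  rewrite !lprod_app, lprod_eval_shift in E; unfold F1Z, rangeZ in E.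
  rewrite !lprod_eval_nat in E; exact E.
Qed.

(** At a pole [x = -c - m] of [Gamma (x + d)] with [m] in [F2], the vanishing factor
    [x + c + m] of [rho] is dropped from both sides of [mass_identity]. *)
Lemma mass_identity_pole x m F2' : Permutation F2 (m :: F2') -> (x + m)%nat = Z.to_nat (- c) ->
  lprod (fun f => INR x - INR f) F1 * lprod (fun f => INR x + IZR c + INR f) F2'
  = lprod (fun h => INR x - IZR h) (Hset c F1 F2) * (INR (fact x) * ((-1) ^ m * INR (fact m))).
Proof.
  intros PF2 Hxm.
  assert (PG : Permutation (shiftF2 c F2) (Z.of_nat x :: shiftF2 c F2')).
  { unfold shiftF2; replace (Z.of_nat x) with (- c - Z.of_nat m)%Z by lia.
    apply (Permutation_map (fun f => (- c - Z.of_nat f)%Z) PF2). }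
  assert (ER : rangeZ (Z.to_nat (- c))
               = map Z.of_nat (seq 0 x) ++ Z.of_nat x :: map Z.of_nat (seq (S x) m)).
  { unfold rangeZ; replace (S (Z.to_nat (- c))) with (x + S m)%nat by lia.
    rewrite seq_app, map_app; reflexivity. }
  assert (P : Permutation (F1Z F1 ++ shiftF2 c F2')
                ((Hset c F1 F2 ++ map Z.of_nat (seq 0 x)) ++ map Z.of_nat (seq (S x) m))).
  { apply Permutation_app_inv with (a := Z.of_nat x).
    rewrite <- app_assoc, <- ER.
    eapply Permutation_trans; [|apply (decomposition_perm c F1 F2 Hc HF1 HF2 HC)].
    apply Permutation_app_head, Permutation_sym; auto. }
  apply (lprod_perm (fun h => INR x - IZR h)) in P.
  rewrite !lprod_app, lprod_eval_shift in P; unfold F1Z in P.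
  rewrite !lprod_eval_nat, lprod_above in P.
  pose proof (lprod_falling 0 x) as Ff; simpl (0 + x)%nat in Ff; simpl INR in Ff.
  rewrite Rmult_1_r in Ff; rewrite P, Ff; ring.
Qed.

Lemma rho_lim_regular cs x : is_lim_seq cs (IZR c) -> (Z.to_nat (- c) < x)%nat ->
  is_lim_seq (fun s => rho F1 F2 a (cs s) x) (lprod (fun h => INR x - IZR h) (Hset c F1 F2) * a ^ x).
Proof.
  intros Hl Hx; set (j := (x - S (Z.to_nat (- c)))%nat).
  assert (Hxj : x = (j + S (Z.to_nat (- c)))%nat) by (unfold j; lia).
  assert (EG : INR x + IZR c = INR (S j)) by (rewrite IZR_nonpos, Hxj, plus_INR, !S_INR; auto; ring).
  replace (lprod (fun h => INR x - IZR h) (Hset c F1 F2) * a ^ x) with (rho F1 F2 a (IZR c) x).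
  - apply rho_cont; auto; rewrite EG; apply (lt_INR 0); lia.
  - pose proof (lprod_falling j (S (Z.to_nat (- c)))) as Ff; rewrite <- Hxj in Ff.
    pose proof (INR_fact_neq_0 x) as Hfx; rewrite <- Ff in Hfx.
    apply Rmult_neq_0_reg in Hfx as [HL HJ].
    unfold rho; rewrite mass_identity, EG, Gamma_nat, <- Ff; field; auto.
Qed.

(** At a pole ([x = -c - m], [m] in [F2]) the zero of the factor [x + d + m] cancels the
    pole of [Gamma (x + d)]; the residue [(-1)^m / m!] matches [mass_identity_pole]. *)
Lemma rho_lim_pole cs x m : (forall s, ~ nonpos_int (cs s)) -> is_lim_seq cs (IZR c) ->
  In m F2 -> (x + m)%nat = Z.to_nat (- c) ->
  is_lim_seq (fun s => rho F1 F2 a (cs s) x) (lprod (fun h => INR x - IZR h) (Hset c F1 F2) * a ^ x).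
Proof.
  intros Hcs Hl Hm Hxm.
  destruct (in_split _ _ Hm) as [l1 [l2 EF2]].
  assert (PF2 : Permutation F2 (m :: l1 ++ l2))
    by (rewrite EF2; apply Permutation_sym, Permutation_middle).
  set (P1 := lprod (fun f => INR x - INR f) F1).
  set (Q := fun d => lprod (fun f => INR x + d + INR f) (l1 ++ l2)).
  apply is_lim_seq_ext with
    (fun s => P1 * Q (cs s) * (a ^ x / INR (fact x)) * ((INR x + cs s + INR m) * Gamma (INR x + cs s))).
  { intros s; unfold rho; rewrite (lprod_perm _ _ _ PF2), lprod_cons.
    unfold P1, Q; field; apply INR_fact_neq_0. }
  replace (lprod (fun h => INR x - IZR h) (Hset c F1 F2) * a ^ x)
    with (P1 * Q (IZR c) * (a ^ x / INR (fact x)) * / ((-1) ^ m * INR (fact m))).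
  - apply is_lim_seq_mult'; [apply is_lim_seq_mult'; [apply is_lim_seq_mult'|]|].
    + apply is_lim_seq_const.
    + unfold Q; apply lprod_lim; intros; apply is_lim_seq_plus'; auto using is_lim_seq_const.
      apply is_lim_seq_plus'; auto using is_lim_seq_const.
    + apply is_lim_seq_const.
    + apply Gamma_residue; [intros; apply not_nonpos_shift; auto|].
      replace (- INR m) with (INR x + IZR c) by (rewrite IZR_nonpos, <- Hxm, plus_INR by auto; ring).
      apply is_lim_seq_plus'; auto using is_lim_seq_const.
  - unfold P1, Q; rewrite (mass_identity_pole x m (l1 ++ l2) PF2 Hxm).
    pose proof (INR_fact_neq_0 x); pose proof (INR_fact_neq_0 m); pose proof (pow_nonzero (-1) m).
    field; repeat split; auto; lra.
Qed.

Theorem rho_lim_nu cs : (forall s, ~ nonpos_int (cs s)) -> is_lim_seq cs (IZR c) ->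
  forall x, is_lim_seq (fun s => rho F1 F2 a (cs s) x) (nu c F1 F2 a x).
Proof.
  intros Hcs Hl x; unfold nu; destruct (in_dec Nat.eq_dec x F1) as [Hx|Hx].
  - apply is_lim_seq_ext with (fun _ => 0); [intros; rewrite rho_F1; auto|].
    apply is_lim_seq_const.
  - destruct (Nat.lt_ge_cases (Z.to_nat (- c)) x) as [Hlt|Hge]; [apply rho_lim_regular; auto|].
    destruct (HC (Z.of_nat x) ltac:(lia)) as [[f [Hf Ef]]%in_F1Z|[f [Hf Ef]]%in_shiftF2].
    + exfalso; apply Hx; replace x with f by lia; auto.
    + apply (rho_lim_pole cs x f); auto; lia.
Qed.

End Limits.

Lemma not_nonpos_frac c e : 0 < e < 1 -> ~ nonpos_int (IZR c + e).
Proof.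
  intros [H1 H2] [k Hk].
  assert (E : e = IZR (- Z.of_nat k - c)) by (rewrite minus_IZR, opp_IZR, <- INR_IZR_INZ; lra).
  rewrite E in H1, H2; apply lt_IZR in H1; apply lt_IZR in H2; lia.
Qed.

Lemma eventually_forall_lt (P : nat -> nat -> Prop) B :
  (forall x, (x < B)%nat -> exists N, forall s, (N <= s)%nat -> P x s) ->
  exists N, forall s, (N <= s)%nat -> forall x, (x < B)%nat -> P x s.
Proof.
  induction B as [|B IH]; intros H; [exists 0%nat; intros; lia|].
  destruct IH as [N1 H1]; [intros; apply H; lia|].
  destruct (H B ltac:(lia)) as [N2 H2]; exists (max N1 N2); intros s Hs x Hx.
  destruct (Nat.eq_dec x B); [subst; apply H2 | apply H1]; lia.
Qed.

(** The mass [nu x] is nonzero off [F1]: no point of [H] is an integer [x >= 0] outside [F1]. *)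
Lemma nu_neq0 a c F1 F2 x : a <> 0 -> ~ In x F1 -> nu c F1 F2 a x <> 0.
Proof.
  intros Ha Hx; unfold nu; destruct (in_dec Nat.eq_dec x F1) as [H'|_]; [tauto|].
  apply Rmult_integral_contrapositive_currified; [|apply pow_nonzero; auto].
  apply lprod_neq0; intros h Hh E.
  assert (Eh : h = Z.of_nat x) by (apply eq_IZR; rewrite <- INR_IZR_INZ; lra); subst h.
  apply in_Hset in Hh as [[[HI|HI] HN]|[HI _]].
  - apply in_F1Z in HI as [f [Hf Ef]]; apply Hx; replace x with f by lia; auto.
  - apply in_shiftF2 in HI as [f [_ Ef]]; lia.
  - apply in_F1Z in HI as [f [Hf Ef]]; apply Hx; replace x with f by lia; auto.
Qed.

Lemma rho_pos_far a c F1 F2 d x : 0 < a -> (c <= 0)%Z -> (list_max F1 < x)%nat ->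
  (Z.to_nat (- c) < x)%nat -> IZR c < d -> 0 < rho F1 F2 a d x.
Proof.
  intros Ha Hc HF1 Hxc Hd; unfold rho.
  assert (Hxd : 0 < INR x + d).
  { rewrite (IZR_nonpos c Hc) in Hd; apply lt_INR in Hxc; lra. }
  apply Rmult_lt_0_compat; [apply Rmult_lt_0_compat|].
  - apply lprod_pos; intros f Hf.
    assert (Hfx : (f < x)%nat).
    { pose proof (proj1 (list_max_le F1 _) (Nat.le_refl _)) as HM.
      rewrite Forall_forall in HM; specialize (HM f Hf); lia. }
    apply lt_INR in Hfx; lra.
  - apply lprod_pos; intros f _; pose proof (pos_INR f); lra.
  - unfold Rdiv; apply Rmult_lt_0_compat; [apply Rmult_lt_0_compat|].
    + apply pow_lt; lra.
    + apply Gamma_pos; auto.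
    + apply Rinv_0_lt_compat, INR_fact_lt_0.
Qed.

(** Large [x] are handled by [rho_pos_far]; each of
    the finitely many small [x] either lies in [F1] ([rho = 0]) or has [nu x > 0], hence
    [rho > 0] eventually by [rho_lim_nu]. *)
Theorem positive_approximation a c F1 F2 : 0 < a -> (c <= 0)%Z ->
  finset_pos F1 -> finset_pos F2 -> condC c F1 F2 -> positive_measure (nu c F1 F2 a) ->
  exists cs : nat -> R,
    (forall s, ~ nonpos_int (cs s)) /\ is_lim_seq cs (IZR c) /\
    forall s, positive_measure (rho F1 F2 a (cs s)).
Proof.
  intros Ha Hc HF1 HF2 HC [Hnu _].
  set (cs0 := fun s : nat => IZR c + / INR (s + 2)).
  assert (Hfr : forall s, 0 < / INR (s + 2) < 1).
  { intros s; assert (2 <= INR (s + 2)) by (rewrite plus_INR; pose proof (pos_INR s); simpl; lra).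
    split; [apply Rinv_0_lt_compat; lra|].
    rewrite <- Rinv_1; apply Rinv_lt_contravar; lra. }
  assert (Hnp : forall s, ~ nonpos_int (cs0 s)) by (intros; apply not_nonpos_frac; auto).
  assert (Hlim : is_lim_seq cs0 (IZR c)).
  { replace (IZR c) with (IZR c + 0) by ring.
    apply is_lim_seq_plus'; [apply is_lim_seq_const|].
    exact (proj1 (is_lim_seq_incr_n (fun n => / INR n) 2 0) inv_INR_lim). }
  set (B := S (max (Z.to_nat (- c)) (list_max F1))).
  assert (Hsmall : forall x, (x < B)%nat ->
            exists N, forall s, (N <= s)%nat -> 0 <= rho F1 F2 a (cs0 s) x).
  { intros x _; destruct (in_dec Nat.eq_dec x F1) as [Hx|Hx].
    - exists 0%nat; intros s _; rewrite rho_F1; auto; lra.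
    - assert (Hpos : 0 < nu c F1 F2 a x).
      { destruct (Hnu x) as [H|H]; auto; exfalso; apply (nu_neq0 a c F1 F2 x); auto; lra. }
      pose proof (rho_lim_nu a c F1 F2 Hc HF1 HF2 HC cs0 Hnp Hlim x) as HL.
      apply is_lim_seq_spec in HL; destruct (HL (mkposreal _ Hpos)) as [N HN].
      exists N; intros s Hs; specialize (HN s Hs); simpl in HN; apply Rabs_def2 in HN; lra. }
  destruct (eventually_forall_lt _ B Hsmall) as [s0 Hs0].
  assert (Hfar : forall s x, (B <= x)%nat -> 0 < rho F1 F2 a (cs0 (s + s0)%nat) x).
  { intros s x Hx; unfold B in Hx; apply (rho_pos_far a c); auto; try lia.
    unfold cs0; specialize (Hfr (s + s0)%nat); lra. }
  exists (fun s => cs0 (s + s0)%nat); split; [|split].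
  - intros; apply Hnp.
  - exact (proj1 (is_lim_seq_incr_n cs0 s0 _) Hlim).
  - intros s; split.
    + intros x; destruct (lt_dec x B); [apply Hs0; auto; lia | left; apply Hfar; lia].
    + exists B; apply Rgt_not_eq, Hfar; lia.
Qed.

Theorem mainTheorem2 (a : R) (c : Z) (F1 F2 : list nat) :
  0 < a < 1 -> (c <= 0)%Z -> finset_pos F1 -> finset_pos F2 -> condC c F1 F2 ->
  (forall cs : nat -> R,
     (forall s, ~ nonpos_int (cs s)) -> is_lim_seq cs (IZR c) ->
     forall x : nat, is_lim_seq (fun s => rho F1 F2 a (cs s) x) (nu c F1 F2 a x))
  /\
  (positive_measure (nu c F1 F2 a) ->
   exists cs : nat -> R,
     (forall s, ~ nonpos_int (cs s)) /\ is_lim_seq cs (IZR c) /\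
     forall s, positive_measure (rho F1 F2 a (cs s))).
Proof.
  intros [Ha _] Hc HF1 HF2 HC; split.
  - exact (rho_lim_nu a c F1 F2 Hc HF1 HF2 HC).
  - exact (positive_approximation a c F1 F2 Ha Hc HF1 HF2 HC).
Qed.
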